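(* For a squarefree integer $d$, the curve $H^d: d y^2=(x^2-x-3)(x^2+2x-12)$ is everywhere locally solvable (has points over $\mathbb{R}$ and over $\mathbb{Q}_p$ for every prime $p$) if and only if every prime $p\mid d$ satisfies $(\tfrac{p}{13})=1$ or $p=13$.
   Context: $(\tfrac{p}{13})$ is the Legendre symbol. Local solvability refers to the smooth projective model of the genus one curve $d y^2=(x^2-x-3)(x^2+2x-12)$. *)

From mathcomp Require Import all_boot all_order all_algebra.
From mathcomp Require Import reals.
Set Implicit Arguments. Unset Strict Implicit. Unset Printing Implicit Defensive.
Import Order.TTheory GRing.Theory Num.Theory.
Local Open Scope ring_scope.

Definition quartF (R : comNzRingType) (X Z : R) : R :=
  (X ^+ 2 - X * Z - 3 * Z ^+ 2) * (X ^+ 2 + 2 * X * Z - 12 * Z ^+ 2).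

Definition squarefree_int (d : int) : Prop :=
  d != 0 /\ forall p : nat, prime p -> ~~ (((p ^ 2)%N)%:Z %| d)%Z.

Definition legendre (a : int) (q : nat) : int :=
  if (q%:Z %| a)%Z then 0
  else if [exists x : 'I_q, ((x%:Z) ^+ 2 == a %[mod q%:Z])%Z] then 1 else -1.

(* p-adic integers Z_p, as the inverse limit of Z/p^k Z: compatible sequences
   of integer residues a k (mod p^k).  Two sequences represent the same
   p-adic integer iff they agree mod p^k for every k. *)
Definition padic_int (p : nat) : Type :=
  {a : nat -> int | forall k : nat, (a k.+1 = a k %[mod ((p ^ k)%N)%:Z])%Z}.

(* Smooth projective model of  d y^2 = F(x,1): the curve
   d Y^2 = F(X,Z) in the weighted projective plane P(1,2,1).
   Real points: (X:Y:Z) with (X,Z) <> (0,0). *)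
Definition has_real_point (d : int) : Prop :=
  forall R : realType, exists X Y Z : R,
    (X != 0 \/ Z != 0) /\ d%:~R * Y ^+ 2 = quartF X Z.

(* Q_p-points: every Q_p-point of the weighted projective model can be scaled
   to (X:Y:Z) with X, Y, Z in Z_p and not both X, Z in pZ_p (d squarefree);
   conversely such a triple is a Q_p-point.  The equation d Y^2 = F(X,Z)
   holds in Z_p iff it holds modulo p^k for all k. *)
Definition has_Qp_point (d : int) (p : nat) : Prop :=
  exists X Y Z : padic_int p,
    ~~ ((p%:Z %| sval X 1%N)%Z && (p%:Z %| sval Z 1%N)%Z) /\
    forall k : nat,
      (d * sval Y k ^+ 2 = quartF (sval X k) (sval Z k) %[mod ((p ^ k)%N)%:Z])%Z.

Definition everywhere_locally_solvable (d : int) : Prop :=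
  has_real_point d /\ forall p : nat, prime p -> has_Qp_point d p.

(* Hensel's lemma reduces everything to points modulo p (modulo 8 for p = 2) that are
   smooth in the lifted coordinate.  For odd p <> 13: when 13 is a square mod p, the
   factor x^2 - x - 3 (discriminant 13) has a simple root mod p, giving (x : 0 : 1); when
   moreover p does not divide d, one of d, 13 d and 13 is a square mod p, the first two
   giving (1 : y : 0) and (-1 : y : 1).  The primes 2 (for odd d) and 13 are handled the
   same way with explicit points.  Conversely, if p divides d then F(x, z) = 0 mod p with
   (x, z) <> 0 mod p, so a discriminant 13 or 4 * 13 of a quadratic factor of F is a
   square mod p, which by quadratic reciprocity for 13 (proved with the quadratic Gauss
   sum of conductor 13) means (p / 13) = 1; and 2 cannot divide d, since d = 2 mod 4
   leaves no primitive solution mod 8. *)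

From mathcomp Require Import all_boot all_order all_algebra.
From mathcomp Require Import reals.
From mathcomp Require Import all_fingroup all_solvable all_field.
From mathcomp Require Import zify ring.
Import Order.TTheory GRing.Theory Num.Theory.
Local Open Scope ring_scope.
Set Implicit Arguments. Unset Strict Implicit. Unset Printing Implicit Defensive.

Lemma rmorph_quartF (R S : comNzRingType) (f : {rmorphism R -> S}) (x z : R) :
  f (quartF x z) = quartF (f x) (f z).
Proof. by rewrite /quartF !(rmorph_nat, rmorphM, rmorphB, rmorphD, rmorphXn). Qed.

Lemma intr_quartF (R : comNzRingType) (x z : int) :
  (quartF x z)%:~R = quartF (x%:~R : R) z%:~R.
Proof. exact: rmorph_quartF. Qed.

Lemma intr_Zp_eq0 (n : nat) (x : int) : (1 < n)%N ->
  (x%:~R == 0 :> 'Z_n) = (n%:Z %| x)%Z.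
Proof.
move=> n_gt1; have natr_eq0 m : (m%:R == 0 :> 'Z_n) = (n %| m)%N.
  by rewrite -val_eqE /= val_Zp_nat.
case: x => m; first by rewrite -pmulrn natr_eq0.
by rewrite NegzE mulrNz oppr_eq0 -pmulrn natr_eq0 dvdzE.
Qed.

Section EulerCriterion.

Variable F : finFieldType.
Hypothesis F_odd : odd #|F|.
Local Notation h := #|F|./2.

Lemma card_finField_pred : #|F|.-1 = (h * 2)%N.
Proof. by rewrite -{1}(odd_double_half #|F|) F_odd muln2. Qed.

Lemma expf_card_pred (a : F) : a != 0 -> a ^+ #|F|.-1 = 1.
Proof.
move=> a_neq0; apply: (mulfI a_neq0); rewrite mulr1 -exprS.
by rewrite prednK ?expf_card // (ltn_trans _ (finNzRing_gt1 F)).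
Qed.

Lemma expf_half_sign (a : F) : a != 0 -> a ^+ h = 1 \/ a ^+ h = -1.
Proof.
move=> a_neq0; have : (a ^+ h - 1) * (a ^+ h + 1) = 0.
  by rewrite -subr_sqr expr1n -exprM -card_finField_pred expf_card_pred ?subrr.
by move/eqP; rewrite mulf_eq0 subr_eq0 addr_eq0 => /orP[] /eqP; [left | right].
Qed.

Lemma euler_criterion (a : F) : a != 0 -> (exists s, s ^+ 2 = a) <-> a ^+ h = 1.
Proof.
move=> a_neq0; split=> [[s sE]|a_h].
  rewrite -sE in a_neq0 *.
  have s_neq0 : s != 0 by apply: contraNneq a_neq0 => ->; rewrite expr0n.
  by rewrite -exprM mulnC -card_finField_pred expf_card_pred.
have /cyclicP[g unitsE] := field_unit_group_cyclic [set: {unit F}]%G.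
have /cycleP[i aE] : finField_unit a_neq0 \in <[g]>%g by rewrite -unitsE inE.
have g_order : #[g]%g = (h * 2)%N.
  by rewrite /order -unitsE card_finField_unit card_finField_pred.
have h_gt0 : (0 < h)%N.
  by move: (finNzRing_gt1 F) card_finField_pred; move: #|F| => n; lia.
have : (finField_unit a_neq0 ^+ h)%g == 1%g.
  by apply/eqP/val_inj; rewrite FinRing.val_unitX /= a_h.
rewrite aE -expgM -order_dvdn g_order mulnC dvdn_pmul2r // => /dvdnP[j iE].
by exists (val (g ^+ j)%g); rewrite -FinRing.val_unitX -expgM -iE -aE.
Qed.

Lemma sqrf_mul_nonsqr (a b : F) : a != 0 -> b != 0 ->
  ~ (exists s, s ^+ 2 = a) -> ~ (exists s, s ^+ 2 = b) -> exists s, s ^+ 2 = a * b.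
Proof.
move=> a_neq0 b_neq0; rewrite !euler_criterion ?mulf_neq0 // exprMn.
by case: (expf_half_sign a_neq0) => ->; case: (expf_half_sign b_neq0) => -> //;
  rewrite mulrNN mulr1.
Qed.

End EulerCriterion.

Definition chi13 (n : nat) : int :=
  nth 0 [:: 0; 1; -1; 1; 1; -1; -1; -1; -1; 1; 1; -1; 1] (n %% 13).

Lemma chi13_mod (n : nat) : chi13 (n %% 13) = chi13 n.
Proof. by rewrite /chi13 modn_mod. Qed.

Lemma chi13_values (n : nat) : chi13 n \in [:: 0; 1; -1].
Proof.
rewrite /chi13; have : (n %% 13 < 13)%N by rewrite ltn_mod.
by move: (n %% 13)%N; do 13!case=> //.
Qed.

Lemma chi13M (m n : nat) : chi13 (m * n) = chi13 m * chi13 n.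
Proof.
rewrite -chi13_mod -modnMm -(chi13_mod m) -(chi13_mod n).
have : (m %% 13 < 13)%N by rewrite ltn_mod.
have : (n %% 13 < 13)%N by rewrite ltn_mod.
move: (m %% 13)%N (n %% 13)%N => {m n} m n n_lt m_lt.
have table : all (fun m => all (fun n => chi13 (m * n %% 13) == chi13 m * chi13 n)
  (iota 0 13)) (iota 0 13) by vm_compute.
by apply/eqP; move/allP: table => /(_ m); rewrite mem_iota => /(_ m_lt)/allP/(_ n);
  rewrite mem_iota; apply.
Qed.

Lemma legendre13 (n : nat) : legendre n%:Z 13 = chi13 n.
Proof.
rewrite /legendre -chi13_mod.
have -> : (13%:Z %| n%:Z)%Z = (n %% 13 == 0)%N by [].
have -> : [exists x : 'I_13, ((x%:Z) ^+ 2 == n%:Z %[mod 13%:Z])%Z] =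
          has (fun x => x * x %% 13 == n %% 13)%N (iota 0 13).
  apply/existsP/hasP => [[x]|[x]].
    rewrite expr2 -PoszM !modz_nat => x_sq.
    by exists (val x); rewrite // mem_iota /= ltn_ord.
  rewrite mem_iota => x_lt x_sq; exists (Ordinal x_lt).
  by rewrite expr2 -PoszM !modz_nat.
have : (n %% 13 < 13)%N by rewrite ltn_mod.
by move: (n %% 13)%N => r; do 13!case: r => [//|r].
Qed.

Lemma multiplicative_eq1 (R : pzSemiRingType) (f : nat -> R) (n : nat) :
  {morph f : a b / (a * b)%N >-> a * b} -> f 1%N = 1 -> (0 < n)%N ->
  (forall q, prime q -> (q %| n)%N -> f q = 1) -> f n = 1.
Proof.
move=> fM f1 n_gt0 f_primes; rewrite (prod_prime_decomp n_gt0) big_seq.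
apply: (big_ind (fun m => f m = 1)) => // [a b fa fb|[q e] /mem_prime_decomp[q_prime e_gt0 qe_dvd]].
  by rewrite fM fa fb mulr1.
have fq : f q = 1 by apply: f_primes; rewrite // (dvdn_trans (dvdn_exp e_gt0 (dvdnn q)) qe_dvd).
by elim: e {e_gt0 qe_dvd} => //= e IH; rewrite expnS fM fq IH mulr1.
Qed.

Lemma F13_sqr_of_chi13 (e : int) : chi13 `|e| = 1 -> exists s : 'F_13, s ^+ 2 = e%:~R.
Proof.
suff sqr_nat n : chi13 n = 1 -> exists s : 'F_13, s ^+ 2 = n%:R.
  case: e => n /sqr_nat[s sE]; first by exists s; rewrite -pmulrn.
  exists (5 * s); rewrite NegzE mulrNz -pmulrn exprMn sE.
  by rewrite (_ : 5 ^+ 2 = -1) ?mulN1r //; apply/eqP.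
have table : all (fun r => (chi13 r == 1) ==>
    has (fun s => (s%:R : 'F_13) ^+ 2 == r%:R) (iota 0 13)) (iota 0 13).
  by vm_compute.
rewrite -chi13_mod -(Fp_nat_mod (isT : prime 13)) => chi_n; move/allP/(_ (n %% 13)%N): table.
by rewrite mem_iota ltn_mod chi_n => /(_ isT) /hasP[s _ /eqP sE]; exists s%:R.
Qed.

Definition gauss13 (R : comNzRingType) (z : R) : R :=
  z - z ^+ 2 + z ^+ 3 + z ^+ 4 - z ^+ 5 - z ^+ 6 - z ^+ 7 - z ^+ 8
    + z ^+ 9 + z ^+ 10 - z ^+ 11 + z ^+ 12.

Section Gauss13.

Variables (F : fieldType) (z : F).
Hypotheses (z13 : z ^+ 13 = 1) (z_neq1 : z != 1).

Lemma expr13_mod (n : nat) : z ^+ n = z ^+ (n %% 13).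
Proof. by rewrite {1}(divn_eq n 13) exprD mulnC exprM z13 expr1n mul1r. Qed.

Lemma cyclotomic13_root :
  1 + z + z ^+ 2 + z ^+ 3 + z ^+ 4 + z ^+ 5 + z ^+ 6 + z ^+ 7 + z ^+ 8 + z ^+ 9
    + z ^+ 10 + z ^+ 11 + z ^+ 12 = 0.
Proof.
set N := (X in X = 0).
have : (z - 1) * N = z ^+ 13 - 1 by rewrite /N; ring.
by rewrite z13 subrr => /eqP; rewrite mulf_eq0 subr_eq0 (negbTE z_neq1) => /eqP.
Qed.

(* The cofactor of [z ^+ 13 - 1] is the quotient of [gauss13 X ^+ 2 - 13 + Phi_13 X]
   by [X ^+ 13 - 1] in [int[X]]. *)
Lemma gauss13_sqr : gauss13 z ^+ 2 = 13.
Proof.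
have -> : gauss13 z ^+ 2 = 13
    - (1 + z + z ^+ 2 + z ^+ 3 + z ^+ 4 + z ^+ 5 + z ^+ 6 + z ^+ 7 + z ^+ 8 + z ^+ 9
       + z ^+ 10 + z ^+ 11 + z ^+ 12)
    + (z ^+ 13 - 1) * (12 - z - 2 * z ^+ 2 + z ^+ 3 - 4 * z ^+ 4 - z ^+ 5 + 2 * z ^+ 6
       - 3 * z ^+ 7 + 3 * z ^+ 9 - 2 * z ^+ 10 + z ^+ 11).
  by rewrite /gauss13; ring.
by rewrite cyclotomic13_root z13 subrr mul0r subr0 addr0.
Qed.

Lemma gauss13_exp (r : nat) : gauss13 (z ^+ r) = (chi13 r)%:~R * gauss13 z.
Proof.
have zS13 n : z ^+ n.+4.+4.+4.+1 = z ^+ n.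
  by rewrite -[n.+4.+4.+4.+1]/(13 + n)%N exprD z13 mul1r.
rewrite /chi13 expr13_mod.
have : (r %% 13 < 13)%N by rewrite ltn_mod.
move: (r %% 13)%N => {}r.
by do 13!(case: r => [_|r]; first by rewrite /gauss13 -!exprM /= ?zS13; ring).
Qed.

Lemma gauss13_frobenius (p : nat) : p \in [pchar F] ->
  gauss13 z ^+ p = (chi13 p)%:~R * gauss13 z.
Proof.
move=> charFp; rewrite -gauss13_exp -(pFrobenius_autE charFp) /gauss13.
by rewrite !(rmorphD, rmorphN, rmorphXn) /= pFrobenius_autE.
Qed.

Lemma expr13_half_chi13 (p : nat) : prime p -> p \in [pchar F] -> p != 13%N -> odd p ->
  13 ^+ p./2 = (chi13 p)%:~R :> F.
Proof.
move=> p_prime charFp p_neq13 p_odd.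
have gauss13_neq0 : gauss13 z != 0.
  apply/negP => /eqP gauss13_eq0; move/eqP: gauss13_sqr.
  by rewrite gauss13_eq0 expr0n eq_sym -(dvdn_pcharf charFp 13) dvdn_prime2 // (negbTE p_neq13).
have := gauss13_frobenius charFp.
rewrite -{1}(odd_double_half p) p_odd exprD expr1 -mul2n exprM gauss13_sqr mulrC.
by move/(mulIf gauss13_neq0).
Qed.

End Gauss13.

Lemma finField_root13 (p : nat) : prime p -> p != 13%N ->
  exists (F : finFieldType) (z : F), [/\ p \in [pchar F], z ^+ 13 = 1 & z != 1].
Proof.
move=> p_prime p_neq13.
have [F charFp cardF] := pPrimePowerField p_prime (isT : (0 < 12)%N).
have dvd13_units : (13 %| #|[set: {unit F}]|)%N.
  have p_coprime : coprime p 13 by rewrite prime_coprime // dvdn_prime2 // eq_sym.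
  have fermat := Euler_exp_totient p_coprime; rewrite totient_prime // in fermat.
  rewrite card_finField_unit cardF -subn1 -eqn_mod_dvd ?fermat //.
  by rewrite expn_gt0 prime_gt0.
have [g _ g_order] := Cauchy (isT : prime 13) dvd13_units.
exists F, (val g); split=> //.
  by rewrite -FinRing.val_unitX -g_order expg_order FinRing.val_unit1.
apply: (@contra_neq _ _ #[g]%g 1%N) => [g1|]; last by rewrite g_order.
by rewrite (_ : g = 1%g) ?order1 //; apply: val_inj; rewrite g1 FinRing.val_unit1.
Qed.

Lemma Fp_prime_neq0 (p q : nat) : prime p -> prime q -> p != q -> (q%:R : 'F_p) != 0.
Proof. by move=> p_prime q_prime; rewrite -(dvdn_pcharf (pchar_Fp p_prime)) dvdn_prime2. Qed.

Lemma Fp_expr13_half (p : nat) : prime p -> odd p -> p != 13%N ->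
  (13 : 'F_p) ^+ p./2 = (chi13 p)%:~R.
Proof.
move=> p_prime p_odd p_neq13.
have [F [z [charFp z13 z_neq1]]] := finField_root13 p_prime p_neq13.
have : (p%:Z %| 13 ^+ p./2 - chi13 p)%Z.
  by rewrite (dvdz_pcharf charFp) rmorphB rmorphXn /= (expr13_half_chi13 z13) ?subrr.
by rewrite (dvdz_pcharf (pchar_Fp p_prime)) rmorphB rmorphXn subr_eq0 => /eqP.
Qed.

Lemma quadratic_reciprocity13 (p : nat) : prime p -> odd p -> p != 13%N ->
  (exists s : 'F_p, s ^+ 2 = 13) <-> chi13 p = 1.
Proof.
move=> p_prime p_odd p_neq13.
have Fp_odd : odd #|'F_p| by rewrite card_Fp.
have Fp_13_neq0 := Fp_prime_neq0 p_prime (isT : prime 13) p_neq13.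
rewrite (euler_criterion Fp_odd Fp_13_neq0) card_Fp // Fp_expr13_half //.
split=> [|->] //; have := chi13_values p; rewrite !inE => /or3P[] /eqP -> //.
have p_neq2 : p != 2%N by apply: contraTneq p_odd => ->.
move/eqP; rewrite rmorphN1 eq_sym -addr_eq0 -(natrD _ 1 1).
by rewrite (negbTE (Fp_prime_neq0 p_prime (isT : prime 2) p_neq2)).
Qed.

Definition quad (A B C y : int) : int := A * y ^+ 2 + B * y + C.

Definition padic_coherent (m : int) (a : nat -> int) : Prop :=
  forall k, (m ^+ k %| a k.+1 - a k)%Z.

Definition padic_root (m : int) (f : int -> int) : Prop :=
  exists2 a, padic_coherent m a & forall k, (m ^+ k %| f (a k))%Z.

Lemma padic_root_scale (m c : int) (f g : int -> int) :
  (forall y, g y = c * f y) -> padic_root m f -> padic_root m g.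
Proof. by move=> gE [a coh root]; exists a => // k; rewrite gE dvdz_mull. Qed.

Lemma quad_newton (A B C u y : int) :
  quad A B C (y - u * quad A B C y) =
  quad A B C y * (1 - u * (2 * A * y + B) + A * u ^+ 2 * quad A B C y).
Proof. by rewrite /quad; ring. Qed.

(* Newton's iteration with the derivative frozen at [y0]: [y |-> y - u f(y)],
   [u] an inverse of [f'(y0)] modulo [m]. *)
Lemma quad_hensel (m A B C y0 : int) :
  (m %| quad A B C y0)%Z -> coprimez m (2 * A * y0 + B) -> padic_root m (quad A B C).
Proof.
move=> root0 simple0.
have [u m_dvd_1u] : exists u, (m %| 1 - u * (2 * A * y0 + B))%Z.
  have [v [u uv]] := Bezoutz m (2 * A * y0 + B).
  by exists u; rewrite (eqP simple0) in uv; rewrite -{1}uv addrK dvdz_mull.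
pose a k := iter k (fun y => y - u * quad A B C y) y0.
have inv k : (m %| a k - y0)%Z /\ (m ^+ k.+1 %| quad A B C (a k))%Z.
  elim: k => [|k [cong_k root_k]]; first by rewrite subrr dvdz0 expr1.
  have m_dvd_f : (m %| quad A B C (a k))%Z.
    exact: dvdz_trans (dvdz_exp2l m (ltn0Sn k)) root_k.
  rewrite /a iterS -/(a k); split.
    by rewrite addrAC rpredB // dvdz_mull.
  rewrite quad_newton [m ^+ k.+2]exprSr dvdz_mul //.
  have -> : 1 - u * (2 * A * a k + B) + A * u ^+ 2 * quad A B C (a k) =
    (1 - u * (2 * A * y0 + B)) - 2 * A * u * (a k - y0) + A * u ^+ 2 * quad A B C (a k).
    by ring.
  by rewrite rpredD ?dvdz_mull // rpredB ?dvdz_mull.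
have weaken k x : (m ^+ k.+1 %| x)%Z -> (m ^+ k %| x)%Z.
  by apply: dvdz_trans; rewrite dvdz_exp2l.
exists a => k; apply: weaken; last exact: (inv k).2.
by rewrite /a iterS -/(a k) addrC addKr rpredN dvdz_mull // (inv k).2.
Qed.

Lemma Fp_intr_lift (p : nat) (s : 'F_p) : exists y : int, y%:~R = s.
Proof. by exists (val s)%:Z; rewrite -pmulrn natr_Zp. Qed.

Lemma padic_root_sqr (p : nat) (A B : int) : prime p -> odd p ->
  (A%:~R * B%:~R : 'F_p) != 0 -> (exists s : 'F_p, s ^+ 2 = A%:~R * B%:~R) ->
  padic_root p (fun y => A * y ^+ 2 - B).
Proof.
move=> p_prime p_odd; set a : 'F_p := A%:~R; set b : 'F_p := B%:~R.
move=> ab_neq0 [s sE]; have Fp_dvd := dvdz_pcharf (pchar_Fp p_prime).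
have [a_neq0 b_neq0] : a != 0 /\ b != 0 by apply/andP; rewrite -negb_or -mulf_eq0.
have s_neq0 : s != 0 by apply: contraNneq ab_neq0 => s0; rewrite -sE s0 expr0n.
have two_neq0 : (2 : 'F_p) != 0.
  by apply: Fp_prime_neq0 => //; apply: contraTneq p_odd => ->.
have [y0 y0E] := Fp_intr_lift (s / a).
apply: (@padic_root_scale _ 1 (quad A 0 (- B))); first by move=> y; rewrite /quad; ring.
apply: (@quad_hensel _ _ _ _ y0).
  rewrite Fp_dvd /quad !intrD !intrM intrN -!/a -!/b y0E mul0r addr0; apply/eqP.
  by rewrite -[b](mulKf a_neq0) -sE; field.
rewrite coprimezE prime_coprime // -dvdzE Fp_dvd addr0 !intrM y0E -/a.
by rewrite -mulrA [a * _]mulrC divfK // mulf_neq0 // -pmulrn.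
Qed.

(* With [y = 1 + 2 w], [A y^2 - B = 4 (A w^2 + A w + (A - B) / 4)], and the right-hand
   quadratic has odd derivative [2 A w + A]. *)
Lemma padic_root_sqr_2 (A B : int) : ~~ (2 %| A)%Z -> (8 %| A - B)%Z ->
  padic_root 2 (fun y => A * y ^+ 2 - B).
Proof.
move=> A_odd /dvdzP[t tE].
have [||w w_coh w_root] := @quad_hensel 2 A A (2 * t) 0.
- by rewrite (_ : quad _ _ _ 0 = 2 * t) ?dvdz_mulr // /quad; ring.
- by rewrite mulr0 add0r coprimezE prime_coprime.
exists (fun k => 1 + 2 * w k) => k.
  by rewrite (_ : _ - _ = 2 * (w k.+1 - w k)) ?dvdz_mull //; ring.
have -> : A * (1 + 2 * w k) ^+ 2 - B = 4 * quad A A (2 * t) (w k) + (A - B - t * 8).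
  by rewrite /quad; ring.
by rewrite tE subrr addr0 dvdz_mull.
Qed.

Lemma padic_root_quad13 (p : nat) : prime p -> odd p -> p != 13%N ->
  (exists s : 'F_p, s ^+ 2 = 13) -> padic_root p (quad 1 (-1) (-3)).
Proof.
move=> p_prime p_odd p_neq13 [s sE]; have Fp_dvd := dvdz_pcharf (pchar_Fp p_prime).
have two_neq0 : (2 : 'F_p) != 0.
  by apply: Fp_prime_neq0 => //; apply: contraTneq p_odd => ->.
have s_neq0 : s != 0.
  apply: contraTneq (Fp_prime_neq0 p_prime (isT : prime 13) p_neq13) => s0.
  by rewrite -sE s0 expr0n.
have [x0 x0E] := Fp_intr_lift ((1 + s) / 2).
apply: (@quad_hensel _ _ _ _ x0).
  rewrite Fp_dvd /quad !intrD !intrM x0E; apply/eqP.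
  rewrite !intrN -!pmulrn -[RHS](mul0r (4 : 'F_p)^-1) -(subrr (13 : 'F_p)) -{1}sE.
  by field; rewrite (_ : 4 = 2 * 2) ?mulf_neq0 //; ring.
rewrite coprimezE prime_coprime // -dvdzE Fp_dvd intrB !intrM x0E -!pmulrn.
by rewrite (_ : _ - _ = s) //; field.
Qed.

Lemma PoszX (p k : nat) : ((p ^ k)%N)%:Z = p%:Z ^+ k.
Proof. by rewrite -!natz natrX. Qed.

Lemma padic_coherent_const (m c : int) : padic_coherent m (fun=> c).
Proof. by move=> k; rewrite subrr dvdz0. Qed.

Lemma padic_coherent_mod (p : nat) (a : nat -> int) : padic_coherent p a ->
  forall k, (a k.+1 = a k %[mod ((p ^ k)%N)%:Z])%Z.
Proof. by move=> coh k; apply/eqP; rewrite eqz_mod_dvd PoszX. Qed.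

Lemma padic_int_cong (p : nat) (x : padic_int p) (j k : nat) : (j <= k)%N ->
  (p%:Z ^+ j %| sval x k - sval x j)%Z.
Proof.
move/subnK <-; elim: (k - j)%N => [|i IH]; first by rewrite subrr dvdz0.
rewrite addSn -(subrK (sval x (i + j)) (sval x (i + j).+1)) -addrA rpredD //.
apply: dvdz_trans (dvdz_exp2l _ (leq_addl i j)) _.
by rewrite -PoszX -eqz_mod_dvd; apply/eqP; exact: (svalP x).
Qed.

Lemma has_Qp_point_coherent (p : nat) (d : int) (X Y Z : nat -> int) :
  padic_coherent p X -> padic_coherent p Y -> padic_coherent p Z ->
  ~~ ((p%:Z %| X 1%N)%Z && (p%:Z %| Z 1%N)%Z) ->
  (forall k, (p%:Z ^+ k %| d * Y k ^+ 2 - quartF (X k) (Z k))%Z) ->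
  has_Qp_point d p.
Proof.
move=> cohX cohY cohZ XZ1 eqn.
exists (exist _ X (padic_coherent_mod cohX)), (exist _ Y (padic_coherent_mod cohY)).
exists (exist _ Z (padic_coherent_mod cohZ)); split=> // k.
by apply/eqP; rewrite eqz_mod_dvd PoszX.
Qed.

Lemma Qp_point_of_sqr (p : nat) (d B c X0 Z0 : int) :
  ~~ ((p%:Z %| X0)%Z && (p%:Z %| Z0)%Z) -> quartF X0 Z0 = c ^+ 2 * B ->
  padic_root p (fun y => d * y ^+ 2 - B) -> has_Qp_point d p.
Proof.
move=> XZ0 FE [y coh root].
apply: (@has_Qp_point_coherent p d (fun=> X0) (fun k => c * y k) (fun=> Z0)) => //.
- exact: padic_coherent_const.
- by move=> k; rewrite -mulrBr dvdz_mull.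
- exact: padic_coherent_const.
move=> k; rewrite FE (_ : _ - _ = c ^+ 2 * (d * y k ^+ 2 - B)) ?dvdz_mull //.
by ring.
Qed.

Lemma Qp_point_of_root (p : nat) (d : int) :
  prime p -> padic_root p (quad 1 (-1) (-3)) -> has_Qp_point d p.
Proof.
move=> p_prime [x coh root].
apply: (@has_Qp_point_coherent p d x (fun=> 0) (fun=> 1)) => //.
- by rewrite andbC dvdz1 /= gtn_eqF ?prime_gt1.
move=> k; rewrite (_ : _ - _ = quad 1 (-1) (-3) (x k) * - (x k ^+ 2 + 2 * x k - 12)).
  exact: dvdz_mulr.
by rewrite /quad /quartF; ring.
Qed.

(* [2 * e = 4] says that [e = 2 mod 4], and [4 * x = 0] that [x] is even. *)
Lemma Z8_quartF_even (e x y z : 'Z_8) :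
  2 * e = 4 -> e * y ^+ 2 = quartF x z -> 4 * x = 0 /\ 4 * z = 0.
Proof.
have table : all (fun e => all (fun x => all (fun y => all (fun z =>
    let: (e, x, y, z) := (e%:R, x%:R, y%:R, z%:R) : 'Z_8 * 'Z_8 * 'Z_8 * 'Z_8 in
    (2 * e == 4) ==> (e * y ^+ 2 == quartF x z) ==> (4 * x == 0) && (4 * z == 0))
  (iota 0 8)) (iota 0 8)) (iota 0 8)) (iota 0 8) by vm_compute.
have elt (a : 'Z_8) : exists2 i, i \in iota 0 8 & a = i%:R.
  by exists (val a); [rewrite mem_iota ltn_ord | rewrite natr_Zp].
have [ie ie8 ->] := elt e; have [ix ix8 ->] := elt x.
have [iy iy8 ->] := elt y; have [iz iz8 ->] := elt z.
move/allP/(_ ie ie8)/allP/(_ ix ix8)/allP/(_ iy iy8)/allP/(_ iz iz8): table.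
by move=> /implyP check /eqP/check/implyP check' /eqP/check'/andP[/eqP -> /eqP ->].
Qed.

Lemma no_Qp_point_2 (d : int) : (2 %| d)%Z -> ~~ (4 %| d)%Z -> ~ has_Qp_point d 2.
Proof.
move=> d_even d_not4 [X [Y [Z [XZ1 eqn]]]].
pose r (a : int) : 'Z_8 := a%:~R.
have r_eq0 a : (r a == 0) = (8 %| a)%Z by exact: intr_Zp_eq0.
have r_even a : (4 * r a == 0) = (2 %| a)%Z.
  by rewrite -(@dvdz_mul2l 4) // -r_eq0 /r intrM -pmulrn.
have [] := @Z8_quartF_even (r d) (r (sval X 3)) (r (sval Y 3)) (r (sval Z 3)).
- have /eqP : r (2 * d - 4) == 0 by rewrite r_eq0; lia.
  by rewrite /r intrB intrM -!pmulrn => /subr0_eq.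
- move/eqP: (eqn 3%N); rewrite eqz_mod_dvd -r_eq0 /r intrB intrM intr_quartF.
  by rewrite expr2 intrM -expr2 subr_eq0 => /eqP.
move=> /eqP X3_even /eqP Z3_even; case/negP: XZ1.
have parity (x : padic_int 2) : (2 %| sval x 1%N)%Z = (2 %| sval x 3%N)%Z.
  rewrite -[sval x 1%N](subKr (sval x 3%N)) rpredBr //.
  exact: (padic_int_cong x (isT : (1 <= 3)%N)).
by rewrite !parity -!r_even X3_even Z3_even.
Qed.

Lemma sqr13_of_quartF_root (F : fieldType) (x z : F) :
  (x != 0) || (z != 0) -> quartF x z = 0 -> exists s : F, s ^+ 2 = 13.
Proof.
move=> xz_neq0; have [z0|z_neq0] := eqVneq z 0.
  move: xz_neq0; rewrite z0 eqxx orbF => x_neq0.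
  rewrite (_ : quartF x 0 = x ^+ 4); last by rewrite /quartF; ring.
  by move/eqP; rewrite expf_eq0 (negbTE x_neq0).
move/eqP; rewrite /quartF mulf_eq0 => /orP[] /eqP factor0.
  exists ((2 * x - z) / z); apply/eqP; rewrite -subr_eq0.
  have -> : ((2 * x - z) / z) ^+ 2 - 13 = 4 * (x ^+ 2 - x * z - 3 * z ^+ 2) / z ^+ 2 by field.
  by rewrite factor0 mulr0 mul0r.
exists ((x + z) / z); apply/eqP; rewrite -subr_eq0.
have -> : ((x + z) / z) ^+ 2 - 13 = (x ^+ 2 + 2 * x * z - 12 * z ^+ 2) / z ^+ 2 by field.
by rewrite factor0 mul0r.
Qed.

Lemma Fp_sqr13_of_Qp_point (p : nat) (d : int) : prime p -> (p%:Z %| d)%Z ->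
  has_Qp_point d p -> exists s : 'F_p, s ^+ 2 = 13.
Proof.
move=> p_prime p_dvd_d [X [Y [Z [XZ1 eqn]]]].
have Fp_dvd := dvdz_pcharf (pchar_Fp p_prime).
apply: (@sqr13_of_quartF_root _ (sval X 1)%:~R (sval Z 1)%:~R).
  by rewrite -!Fp_dvd -negb_and.
move/eqP: (eqn 1%N); rewrite eqz_mod_dvd expn1 Fp_dvd intrB intrM intr_quartF.
by move: p_dvd_d; rewrite Fp_dvd => /eqP ->; rewrite mul0r sub0r oppr_eq0 => /eqP.
Qed.

Lemma Qp_point_coprime (p : nat) (d : int) : prime p -> odd p -> p != 13%N ->
  ~~ (p%:Z %| d)%Z -> has_Qp_point d p.
Proof.
move=> p_prime p_odd p_neq13; rewrite (dvdz_pcharf (pchar_Fp p_prime)) => D_neq0.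
have Fp_odd : odd #|'F_p| by rewrite card_Fp.
have Fp_13_neq0 := Fp_prime_neq0 p_prime (isT : prime 13) p_neq13.
have p_ndvd1 : ~~ (p%:Z %| 1)%Z by rewrite dvdz1 /= gtn_eqF ?prime_gt1.
set D : 'F_p := d%:~R in D_neq0.
case: (pickP (fun s : 'F_p => s ^+ 2 == D)) => [s /eqP sE | D_nsqr].
  apply: (@Qp_point_of_sqr p d 1 1 1 0) => //; first by rewrite (negbTE p_ndvd1).
  by apply: padic_root_sqr => //; rewrite -/D mulr1 //; exists s.
case: (pickP (fun s : 'F_p => s ^+ 2 == 13)) => [s /eqP sE | nsqr13].
  by apply/Qp_point_of_root/padic_root_quad13 => //; exists s.
have [s sE] : exists s : 'F_p, s ^+ 2 = D * 13.
  by apply: sqrf_mul_nonsqr => // -[s /eqP]; rewrite ?D_nsqr ?nsqr13.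
apply: (@Qp_point_of_sqr p d 13 1 (-1) 1) => //; first by rewrite (negbTE p_ndvd1) andbF.
by apply: padic_root_sqr => //; rewrite -/D -pmulrn ?mulf_neq0 //; exists s.
Qed.

Lemma Qp_point_2 (d : int) : ~~ (2 %| d)%Z -> has_Qp_point d 2.
Proof.
move=> d_odd.
have : (8 %| d - 1)%Z \/ (8 %| d - 3)%Z \/ (8 %| d - 13)%Z \/ (8 %| d - -1)%Z.
  by move: d_odd; lia.
case=> [|[|[]]] /(padic_root_sqr_2 d_odd) root.
- by apply: (@Qp_point_of_sqr 2 d 1 1 1 0) root.
- by apply: (@Qp_point_of_sqr 2 d 3 3 1 1) root.
- by apply: (@Qp_point_of_sqr 2 d 13 1 (-1) 1) root.
- by apply: (@Qp_point_of_sqr 2 d (-1) 6 (-2) 1) root.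
Qed.

Lemma Qp_point_13 (d : int) : d != 0 -> ~~ (169 %| d)%Z ->
  (forall q, prime q -> (q %| `|d|)%N -> q != 13%N -> chi13 q = 1) -> has_Qp_point d 13.
Proof.
move=> d_neq0 d_n169 chi_d.
have chi13_abs e : e != 0 -> (forall q, prime q -> (q %| `|e|)%N -> chi13 q = 1) ->
    chi13 `|e| = 1.
  move=> e_neq0; apply: multiplicative_eq1; [exact: chi13M | by [] | by rewrite absz_gt0].
have [/dvdzP[e dE]|d_n13] := boolP (13 %| d)%Z.
  rewrite {}dE in d_neq0 d_n169 chi_d *.
  have e_n13 : ~~ (13 %| e)%Z by apply: contra d_n169 => /dvdzP[f ->]; rewrite -mulrA dvdz_mull.
  have /F13_sqr_of_chi13[s sE] : chi13 `|e| = 1.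
    apply: chi13_abs => [|q q_prime q_dvd]; first by apply: contraNneq d_neq0 => ->; rewrite mul0r.
    apply: chi_d => //; first by rewrite abszM dvdn_mulr.
    by apply: contraNneq e_n13 => q13; rewrite -q13 dvdzE natz.
  apply: (@Qp_point_of_sqr 13 (e * 13) 13 1 (-1) 1) => //.
  apply: (@padic_root_scale _ 13 (fun y => e * y ^+ 2 - 1)); first by move=> y /=; ring.
  apply: padic_root_sqr => //; rewrite mulr1; last by exists s.
  by rewrite -(dvdz_pcharf (pchar_Fp (isT : prime 13))).
have /F13_sqr_of_chi13[s sE] : chi13 `|d| = 1.
  apply: chi13_abs => // q q_prime q_dvd; apply: chi_d => //.
  by apply: contraNneq d_n13 => q13; rewrite -q13 dvdzE natz.
apply: (@Qp_point_of_sqr 13 d 1 1 1 0) => //.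
apply: padic_root_sqr => //; rewrite mulr1; last by exists s.
by rewrite -(dvdz_pcharf (pchar_Fp (isT : prime 13))).
Qed.

Lemma real_point (d : int) : d != 0 -> has_real_point d.
Proof.
move=> d_neq0 R; set D : R := d%:~R.
have D_neq0 : D != 0 by rewrite intr_eq0.
have [D_gt0|D_le0] := ltrP 0 D.
  exists 1, (Num.sqrt D)^-1, 0; split; first by left; exact: oner_neq0.
  by rewrite exprVn sqr_sqrtr ?ltW // mulfV // /quartF; ring.
have ND_gt0 : 0 < - D by rewrite oppr_gt0 lt_neqAle D_neq0.
exists (-2), (6 / Num.sqrt (- D)), 1; split; first by right; exact: oner_neq0.
rewrite expr_div_n sqr_sqrtr ?ltW // (_ : D * (6 ^+ 2 / - D) = - 36); last by field.
by rewrite /quartF; ring.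
Qed.

Theorem mainTheorem4 (d : int) (hd : squarefree_int d) :
  everywhere_locally_solvable d <->
  (forall p : nat, prime p -> (p %| `|d|)%N -> legendre p%:Z 13 = 1 \/ p = 13%N).
Proof.
have [d_neq0 d_sqfree] := hd.
have dvd_absz (p : nat) : (p %| `|d|)%N = (p%:Z %| d)%Z by rewrite dvdzE.
split=> [[_ Qp_point] p p_prime p_dvd | chi_d].
  rewrite legendre13; have [->|p_neq13] := eqVneq p 13%N; [by right | left].
  rewrite dvd_absz in p_dvd; have [p2|p_odd] := even_prime p_prime.
    rewrite p2 in p_dvd p_prime; exfalso.
    exact: no_Qp_point_2 p_dvd (d_sqfree 2%N p_prime) (Qp_point 2%N p_prime).
  apply/(quadratic_reciprocity13 p_prime p_odd p_neq13).
  exact: Fp_sqr13_of_Qp_point p_prime p_dvd (Qp_point p p_prime).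
have chi_primes q : prime q -> (q %| `|d|)%N -> q != 13%N -> chi13 q = 1.
  by move=> q_prime /(chi_d q q_prime); rewrite legendre13 => -[// | ->].
split=> [|p p_prime]; first exact: real_point.
have [p2|p_odd] := even_prime p_prime.
  rewrite p2 in p_prime *; apply: Qp_point_2; rewrite -dvd_absz.
  by apply/negP => /(chi_primes _ p_prime)/(_ isT).
have [->|p_neq13] := eqVneq p 13%N; first exact: Qp_point_13 (d_sqfree 13%N _) _.
have [p_dvd|p_ndvd] := boolP (p%:Z %| d)%Z; last exact: Qp_point_coprime.
apply/Qp_point_of_root/padic_root_quad13/quadratic_reciprocity13 => //.
by apply: chi_primes; rewrite ?dvd_absz.
Qed.
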